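(* Let $\epsilon>0$ and let $\mathcal C_\epsilon$ be an extended set of extreme points. Then for any sequence $\vec b_1,\dots,\vec b_T$ of buyer valuations from the types $\vec v_1,\dots,\vec v_V$ and any menu $\vec\rho^*$ maximizing $\sum_{t=1}^T u(\vec b_t,\vec\rho)$ over all length-$\ell$ menus, $$\max_{\vec\rho\in\mathcal C_\epsilon}\sum_{t=1}^T u(\vec b_t,\vec\rho)\ \ge\ \sum_{t=1}^T u(\vec b_t,\vec\rho^* )-2K\epsilon T.$$
   Context: A length-$\ell$ menu of two-part tariffs is parameterized by $\vec\rho=(p_1^{(1)},p_2^{(1)},\dots,p_1^{(\ell)},p_2^{(\ell)})\in[0,H]^{2\ell}$. A buyer valuation $\vec v=(v(1),\dots,v(K))$ is nondecreasing in $[0,H]$ with $v(0)=0$; the buyer chooses a menu option $(j,k)$, $j\in[\ell]$, $k\in\{0,\dots,K\}$, maximizing $v(k)-\mathbf 1[k\ge1](p_1^{(j)}+kp_2^{(j)})$, and revenue $u(\vec v,\vec\rho)$ is its payment. There are finitely many known buyer types $\vec v_1,\dots,\vec v_V$. A mapping $\mu$ assigns to each type a menu option; it is feasible if some menu induces every type to choose its assigned option; $\lambda_\mu$ is the set of menus inducing $\mu$. An extended set of extreme points $\mathcal C_\epsilon$ is a set of menus such that for every feasible $\mu$ and every extreme point $\vec\rho$ of the closure of $\lambda_\mu$: if $\vec\rho\in\lambda_\mu$ then $\vec\rho\in\mathcal C_\epsilon$, and otherwise there is $\vec\rho'\in\mathcal C_\epsilon\cap\lambda_\mu$ with $\|\vec\rho-\vec\rho'\|_1\le\epsilon$.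 *)

From mathcomp Require Import all_boot all_order all_algebra.
From mathcomp Require Import reals.
Set Implicit Arguments. Unset Strict Implicit. Unset Printing Implicit Defensive.
Import Order.TTheory GRing.Theory Num.Theory.
Local Open Scope ring_scope.

Section TwoPartTariffs.
Variables (R : realType) (l K : nat).

(* A length-l menu of two-part tariffs: rho.1 j = p_1^(j), rho.2 j = p_2^(j). *)
Definition menu := ({ffun 'I_l -> R} * {ffun 'I_l -> R})%type.

(* A menu option (j, k): tariff j, quantity k in {0, ..., K}. *)
Definition moption := ('I_l * 'I_K.+1)%type.

Definition payment (rho : menu) (o : moption) : R :=
  if (0 < (o.2 : nat))%N then rho.1 o.1 + (o.2 : nat)%:R * rho.2 o.1 else 0.

(* Buyer utility v(k) - payment. A valuation is a function nat -> R,
   of which only the values at 0..K matter. *)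
Definition utility (v : nat -> R) (rho : menu) (o : moption) : R :=
  v (o.2 : nat) - payment rho o.

Definition is_valuation (H : R) (v : nat -> R) : Prop :=
  v 0%N = 0 /\ (forall k, (k <= K)%N -> 0 <= v k <= H) /\
  (forall j k, (j <= k)%N -> (k <= K)%N -> v j <= v k).

Definition in_box (H : R) (rho : menu) : Prop :=
  forall j, (0 <= rho.1 j <= H) /\ (0 <= rho.2 j <= H).

Definition utility_maximizing (choose : (nat -> R) -> menu -> moption) : Prop :=
  forall v rho o, utility v rho o <= utility v rho (choose v rho).

Definition revenue (choose : (nat -> R) -> menu -> moption)
  (v : nat -> R) (rho : menu) : R := payment rho (choose v rho).

Definition induces (choose : (nat -> R) -> menu -> moption) (V : nat)
  (vs : 'I_V -> nat -> R) (rho : menu) (mu : 'I_V -> moption) : Prop :=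
  forall i, choose (vs i) rho = mu i.

Definition lambda_set (choose : (nat -> R) -> menu -> moption) (H : R) (V : nat)
  (vs : 'I_V -> nat -> R) (mu : 'I_V -> moption) : menu -> Prop :=
  fun rho => in_box H rho /\ induces choose vs rho mu.

Definition feasible (choose : (nat -> R) -> menu -> moption) (H : R) (V : nat)
  (vs : 'I_V -> nat -> R) (mu : 'I_V -> moption) : Prop :=
  exists rho, lambda_set choose H vs mu rho.

Definition l1dist (rho rho' : menu) : R :=
  \sum_(j < l) (`|rho.1 j - rho'.1 j| + `|rho.2 j - rho'.2 j|).

Definition closure_set (S : menu -> Prop) : menu -> Prop :=
  fun rho => forall e : R, 0 < e -> exists rho', S rho' /\ l1dist rho rho' < e.

Definition convcomb (t : R) (y z : menu) : menu :=
  ([ffun j => t * y.1 j + (1 - t) * z.1 j],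
   [ffun j => t * y.2 j + (1 - t) * z.2 j]).

Definition extreme_point (S : menu -> Prop) (rho : menu) : Prop :=
  S rho /\ forall y z (t : R), S y -> S z -> 0 < t < 1 ->
    rho = convcomb t y z -> y = z.

Definition extended_extreme_set (choose : (nat -> R) -> menu -> moption) (H : R)
  (V : nat) (vs : 'I_V -> nat -> R) (eps : R) (C : menu -> Prop) : Prop :=
  (forall rho, C rho -> in_box H rho) /\
  forall mu : 'I_V -> moption, feasible choose H vs mu ->
  forall rho, extreme_point (closure_set (lambda_set choose H vs mu)) rho ->
    (lambda_set choose H vs mu rho -> C rho) /\
    (~ lambda_set choose H vs mu rho ->
       exists rho', C rho' /\ lambda_set choose H vs mu rho' /\
                    l1dist rho rho' <= eps).

End TwoPartTariffs.

From mathcomp Require Import all_boot all_order all_algebra.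
From mathcomp Require Import reals.
From mathcomp Require Import all_classical all_reals all_analysis.
From mathcomp Require Import ring lra.
Import Order.TTheory GRing.Theory Num.Theory.
Import numFieldTopology.Exports.
Local Open Scope ring_scope.

(* Fix the mapping mu induced by the optimal menu rho_star.  On the
   set lambda_mu every buyer type picks the option prescribed by mu, so the
   revenue of the sequence b_1..b_T is the fixed sum of payments
   F(rho) = sum_t payment rho (mu (b_t)), an affine function of rho which is
   moreover (T K)-Lipschitz for the l1 distance.  Since lambda_mu lies in the
   box [0,H]^{2l}, its closure is compact, and a finite-dimensional Bauer
   maximum principle yields an extreme point x of the closure with
   F(x) >= F(rho_star).  If x lies in lambda_mu it belongs to C_eps; otherwise
   C_eps contains some rho' of lambda_mu with |x - rho'|_1 <= eps, hence
   F(rho') >= F(x) - K eps T.  Either way the loss is at most K eps T, which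
   is below the announced 2 K eps T. *)

Section Payments.
Set Implicit Arguments. Unset Strict Implicit.
Variables (R : realType) (l K : nat).
Implicit Types (a b c : menu R l) (o : moption l K).

Lemma l1dist_ge0 a b : 0 <= l1dist a b.
Proof. by apply: sumr_ge0 => j _; rewrite addr_ge0. Qed.

Lemma l1dist_sym a b : l1dist a b = l1dist b a.
Proof.
by apply: eq_bigr => j _; rewrite !(distrC (a.1 j)) !(distrC (a.2 j)).
Qed.

Lemma l1dist_triangle a b c : l1dist a c <= l1dist a b + l1dist b c.
Proof.
rewrite /l1dist -big_split /=; apply: ler_sum => j _.
have := ler_distD (b.1 j) (a.1 j) (c.1 j).
have := ler_distD (b.2 j) (a.2 j) (c.2 j).
lra.
Qed.

Lemma l1dist_ge_tariff a b j :
  `|a.1 j - b.1 j| + `|a.2 j - b.2 j| <= l1dist a b.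
Proof.
rewrite /l1dist (bigD1 j) //= lerDl; apply: sumr_ge0 => i _.
by rewrite addr_ge0.
Qed.

Lemma payment_convcomb t a b o :
  payment (convcomb t a b) o = t * payment a o + (1 - t) * payment b o.
Proof.
rewrite /payment /convcomb /=; case: ifP => _; last by rewrite !mulr0 addr0.
by rewrite !ffunE; ring.
Qed.

Lemma payment_lipschitz a b o :
  `|payment a o - payment b o| <= K%:R * l1dist a b.
Proof.
rewrite /payment; case: ifP => [k_gt0|_]; last first.
  by rewrite subr0 normr0 mulr_ge0 ?l1dist_ge0.
have k_ge1 : 1 <= (o.2 : nat)%:R :> R by rewrite ler1n.
have k_leK : (o.2 : nat)%:R <= K%:R :> R by rewrite ler_nat -ltnS.
have tariff := l1dist_ge_tariff a b o.1.
set d1 := a.1 o.1 - b.1 o.1 in tariff *; set d2 := a.2 o.1 - b.2 o.1 in tariff *.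
have -> : a.1 o.1 + (o.2 : nat)%:R * a.2 o.1 - (b.1 o.1 + (o.2 : nat)%:R * b.2 o.1)
   = d1 + (o.2 : nat)%:R * d2 by rewrite /d1 /d2; ring.
apply: (le_trans (ler_normD _ _)); rewrite normrM ger0_norm ?ler0n //.
have := normr_ge0 d1; have := normr_ge0 d2.
have : K%:R * (`|d1| + `|d2|) <= K%:R * l1dist a b by rewrite ler_wpM2l ?ler0n.
nra.
Qed.

Definition total_payment (T : nat) (o : 'I_T -> moption l K) a : R :=
  \sum_(t < T) payment a (o t).

Lemma total_payment_convcomb T (o : 'I_T -> moption l K) t a b :
  total_payment o (convcomb t a b) = t * total_payment o a + (1 - t) * total_payment o b.
Proof.
rewrite /total_payment !mulr_sumr -big_split /=; apply: eq_bigr => i _.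
exact: payment_convcomb.
Qed.

Lemma total_payment_lipschitz T (o : 'I_T -> moption l K) a b :
  total_payment o a - T%:R * K%:R * l1dist a b <= total_payment o b.
Proof.
have -> : T%:R * K%:R * l1dist a b = \sum_(t < T) (K%:R * l1dist a b).
  by rewrite sumr_const card_ord -mulrA mulr_natl.
rewrite lerBlDr -big_split /=; apply: ler_sum => i _.
have := payment_lipschitz a b (o i).
have := ler_norm (payment a (o i) - payment b (o i)).
lra.
Qed.

End Payments.

Section MaximumPrinciple.
Set Implicit Arguments. Unset Strict Implicit.
Local Open Scope classical_set_scope.
Variables (R : realType) (n : nat).
Local Notation X := 'rV[R]_n.

Definition comb (t : R) (y z : X) : X := t *: y + (1 - t) *: z.

Definition is_affine (g : X -> R) : Prop :=
  forall t y z, g (comb t y z) = t * g y + (1 - t) * g z.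

Definition face (A B : set X) : Prop :=
  forall y z t, A y -> A z -> 0 < t < 1 -> B (comb t y z) -> B y /\ B z.

Lemma coord_affine (i : 'I_n) : is_affine (fun v => v ord0 i).
Proof. by move=> t y z; rewrite /comb !mxE. Qed.

Lemma face_argmax (A B : set X) (g : X -> R) :
  compact A -> closed B -> B `<=` A -> B !=set0 -> face A B ->
  continuous g -> is_affine g ->
  exists B' : set X, [/\ closed B', B' `<=` B, B' !=set0, face A B' &
    forall x y, B' x -> B y -> g y <= g x].
Proof.
move=> cA cB sBA neB fB cg ag.
have cpB : compact B := subclosed_compact cB cA sBA.
have cgB : {within B, continuous g} by apply: continuous_subspaceT.
have [c Bc gmax] := compact_EVT_max neB cpB cgB.
rewrite inE in Bc.
exists (B `&` [set x | g x = g c]); split.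
- apply: closedI => //; apply: (preimage_closed (D := [set x | x = g c])).
    by move=> x _; apply: cg.
  exact: closed_eq.
- by move=> x [].
- by exists c.
- move=> y z t Ay Az t01 [Bc' gc].
  have [By Bz] := fB _ _ _ Ay Az t01 Bc'.
  have := gmax y (mem_set By); have := gmax z (mem_set Bz).
  move: gc; rewrite /= ag; case/andP: t01 => t0 t1.
  by split; split => //=; nra.
- by move=> x y [_ ->] By; apply: gmax; rewrite inE.
Qed.

(* Lexicographic maximization: maximizing first g and then the coordinates
   0, ..., m-1 in turn gives a nonempty closed face of A made of maximizers of
   g on which the first m coordinates are constant. *)
Lemma lexicographic_face (A : set X) (g : X -> R) (m : nat) :
  compact A -> A !=set0 -> continuous g -> is_affine g ->
  exists B : set X, [/\ closed B, B `<=` A, B !=set0, face A B &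
    (forall x y, B x -> A y -> g y <= g x) /\
    (forall x y, B x -> B y -> forall i : 'I_n, (i < m)%N -> x ord0 i = y ord0 i)].
Proof.
move=> cA neA cg ag; have clA : closed A by apply: compact_closed.
elim: m => [|m [B [cB sBA neB fB [gmax eqB]]]].
  have fA : face A A by move=> y z t Ay Az.
  have [B [cB sBA neB fB gmax]] := face_argmax cA clA (@subset_refl _ A) neA fA cg ag.
  by exists B; split.
have [m_lt_n|n_le_m] := ltnP m n; last first.
  exists B; split=> //; split=> // x y Bx By i _.
  exact: eqB Bx By i (leq_trans (ltn_ord i) n_le_m).
pose i := Ordinal m_lt_n.
have [B' [cB' sB'B neB' fB' imax]] :=
  face_argmax cA cB sBA neB fB (@coord_continuous _ _ _ ord0 i) (coord_affine i).
exists B'; split=> //; first exact: subset_trans sB'B sBA.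
split=> [x y /sB'B|x y B'x B'y j]; first exact: gmax.
rewrite ltnS leq_eqVlt => /orP[/eqP j_m|j_lt_m]; last first.
  exact: eqB (sB'B _ B'x) (sB'B _ B'y) j j_lt_m.
have -> : j = i by apply: val_inj.
by apply: le_anti; apply/andP; split; apply: imax => //; apply: sB'B.
Qed.

Lemma extreme_argmax (A : set X) (g : X -> R) :
  compact A -> A !=set0 -> continuous g -> is_affine g ->
  exists2 x, A x /\ (forall y, A y -> g y <= g x) &
    forall y z t, A y -> A z -> 0 < t < 1 -> x = comb t y z -> y = z.
Proof.
move=> cA neA cg ag.
have [B [_ sBA [x Bx] fB [gmax eqB]]] := lexicographic_face n cA neA cg ag.
exists x; first by split=> [|y]; [exact: sBA | exact: gmax].
move=> y z t Ay Az t01 x_yz; rewrite x_yz in Bx.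
have [By Bz] := fB _ _ _ Ay Az t01 Bx.
by apply/rowP => i; rewrite (eqB _ _ By Bx i) ?(eqB _ _ Bz Bx i).
Qed.

End MaximumPrinciple.

Section MenusAsRows.
Set Implicit Arguments. Unset Strict Implicit.
Local Open Scope classical_set_scope.
Variables (R : realType) (l K : nat).
Local Notation X := 'rV[R]_(l + l).

Definition menu_of_row (v : X) : menu R l :=
  ([ffun j => v ord0 (lshift l j)], [ffun j => v ord0 (rshift l j)]).

Definition row_of_menu (rho : menu R l) : X :=
  \row_i (match fintype.split i with inl j => rho.1 j | inr j => rho.2 j end).

Lemma row_of_menuK : cancel row_of_menu menu_of_row.
Proof.
case=> a b; rewrite /menu_of_row /row_of_menu /=.
congr pair; apply/ffunP => j; rewrite !ffunE mxE.
  by rewrite -[lshift l j]/(unsplit (inl j)) unsplitK.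
by rewrite -[rshift l j]/(unsplit (inr j)) unsplitK.
Qed.

Lemma menu_of_rowK : cancel menu_of_row row_of_menu.
Proof.
move=> v; apply/rowP => i; rewrite mxE.
by case: splitP => k hk; rewrite ffunE; congr (v ord0 _); apply: val_inj.
Qed.

Lemma menu_of_row_comb (t : R) (y z : X) :
  menu_of_row (comb t y z) = convcomb t (menu_of_row y) (menu_of_row z).
Proof. by congr pair; apply/ffunP => j; rewrite !ffunE !mxE. Qed.

Lemma total_payment_affine T (o : 'I_T -> moption l K) :
  is_affine (fun v : X => total_payment o (menu_of_row v)).
Proof. by move=> t y z; rewrite /= menu_of_row_comb total_payment_convcomb. Qed.

Lemma total_payment_continuous T (o : 'I_T -> moption l K) :
  continuous (fun v : X => total_payment o (menu_of_row v)).
Proof.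
apply: continuous_big => [|t _]; first exact: add_continuous.
rewrite /payment /menu_of_row /=; case: (0 < (o t).2)%N; last exact: cst_continuous.
under eq_fun do rewrite !ffunE.
move=> v; have fee := @coord_continuous R _ _ ord0 (lshift l (o t).1) v.
have price := @coord_continuous R _ _ ord0 (rshift l (o t).1) v.
have := continuousD fee (continuousM (@cst_continuous _ R (o t).2%:R v) price).
exact.
Qed.

Lemma closure_set_bounded (H : R) (L : menu R l -> Prop) rho :
  (forall r, L r -> in_box H r) -> closure_set L rho ->
  forall j, `|rho.1 j| <= H + 1 /\ `|rho.2 j| <= H + 1.
Proof.
move=> Lbox cl_rho j; have [r [Lr d_lt1]] := cl_rho 1 ltr01.
have := l1dist_ge_tariff rho r j.
have [/andP[r1_ge0 r1_leH] /andP[r2_ge0 r2_leH]] := Lbox r Lr j.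
have := ler_distD (r.1 j) (rho.1 j) 0; have := ler_distD (r.2 j) (rho.2 j) 0.
rewrite !subr0 (ger0_norm r1_ge0) (ger0_norm r2_ge0).
have := normr_ge0 (rho.1 j - r.1 j); have := normr_ge0 (rho.2 j - r.2 j).
split; lra.
Qed.

Lemma closure_set_closed (L : menu R l -> Prop) :
  closed [set v : X | closure_set L (menu_of_row v)].
Proof.
move=> v cl_v e e_gt0.
have l1_gt0 : 0 < l%:R + 1 :> R by rewrite ltr_wpDl.
pose d := e / (4 * (l%:R + 1)).
have d_gt0 : 0 < d by rewrite divr_gt0 // mulr_gt0.
have de : d * (4 * (l%:R + 1)) = e by rewrite /d divfK // mulf_neq0 // gt_eqF.
have near_v : nbhs v [set w : X | forall i, ball (v ord0 i) d (w ord0 i)].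
  apply: (@filter_forall _ 'I_(l + l)
    (fun i (w : X) => ball (v ord0 i) d (w ord0 i)) (nbhs v)) => i.
  exact: (@coord_continuous _ _ _ ord0 i v _ (nbhsx_ballx _ _ d_gt0)).
have [w [cl_w vw]] := cl_v _ near_v.
have [r [Lr wr]] := cl_w (e / 2) (divr_gt0 e_gt0 (ltr0Sn R 1)).
exists r; split => //.
apply: le_lt_trans (l1dist_triangle _ (menu_of_row w) r) _.
suff : l1dist (menu_of_row v) (menu_of_row w) <= e / 2 by lra.
apply: (@le_trans _ _ (\sum_(j < l) (d + d))).
  apply: ler_sum => j _; rewrite !ffunE.
  have := vw (lshift l j); have := vw (rshift l j).
  rewrite -!ball_normE /ball_ /=; lra.
rewrite sumr_const card_ord -mulr_natr.
have := ler0n R l; nra.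
Qed.

Lemma extreme_point_dominating (H : R) (L : menu R l -> Prop) T
    (o : 'I_T -> moption l K) rho0 :
  (forall r, L r -> in_box H r) -> L rho0 ->
  exists2 rho, extreme_point (closure_set L) rho &
    total_payment o rho0 <= total_payment o rho.
Proof.
move=> Lbox L_rho0.
pose A := [set v : X | closure_set L (menu_of_row v)].
have A_box : A `<=` [set v : X | forall i, `[-(H + 1), H + 1]%classic (v ord0 i)].
  move=> v Av i; rewrite /= in_itv /= -ler_norml.
  have := closure_set_bounded Lbox Av; rewrite -(menu_of_rowK v) /row_of_menu mxE.
  by rewrite row_of_menuK; case: (fintype.split i) => j /(_ j) [].
have cA : compact A.
  apply: subclosed_compact (@closure_set_closed L) _ A_box.
  apply: (@rV_compact _ _ (fun=> `[-(H + 1), H + 1]%classic)) => _.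
  exact: segment_compact.
have A_rho0 : A (row_of_menu rho0).
  rewrite /A /= row_of_menuK => e e_gt0; exists rho0; split => //.
  by rewrite /l1dist big1 // => j _; rewrite !subrr normr0 addr0.
have [v [Av vmax] v_ext] := extreme_argmax cA (ex_intro _ _ A_rho0)
  (total_payment_continuous (o := o)) (total_payment_affine o).
exists (menu_of_row v); last by have := vmax _ A_rho0; rewrite /= row_of_menuK.
split=> // y z t cl_y cl_z t01 v_yz.
have rows_eq : row_of_menu y = row_of_menu z.
  apply: (v_ext _ _ t); rewrite /A /= ?row_of_menuK //.
  by apply: (can_inj menu_of_rowK); rewrite menu_of_row_comb !row_of_menuK.
by rewrite -(row_of_menuK y) rows_eq row_of_menuK.
Qed.

End MenusAsRows.

Theorem mainTheorem8 (R : realType) (l K V T : nat) (H : R)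
  (vs : 'I_V -> nat -> R)
  (choose : (nat -> R) -> menu R l -> moption l K)
  (eps : R) (C : menu R l -> Prop)
  (b : 'I_T -> 'I_V) (rho_star : menu R l) :
  (forall i, is_valuation K H (vs i)) ->
  utility_maximizing choose ->
  0 < eps ->
  extended_extreme_set choose H vs eps C ->
  in_box H rho_star ->
  (forall rho, in_box H rho ->
     \sum_(t < T) revenue choose (vs (b t)) rho <=
     \sum_(t < T) revenue choose (vs (b t)) rho_star) ->
  exists2 rho, C rho &
    \sum_(t < T) revenue choose (vs (b t)) rho >=
    \sum_(t < T) revenue choose (vs (b t)) rho_star - 2 * K%:R * eps * T%:R.
Proof.
move=> _ _ eps_gt0 [_ C_ext] box_star _.
pose mu i := choose (vs i) rho_star.
pose L := lambda_set choose H vs mu.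
have L_star : L rho_star by [].
have revenueE r : L r ->
    \sum_(t < T) revenue choose (vs (b t)) r = total_payment (mu \o b) r.
  by move=> [_ chosen]; apply: eq_bigr => t _; rewrite /revenue chosen.
have L_box r : L r -> in_box H r by case.
have [x x_ext x_dom] := extreme_point_dominating (mu \o b) L_box L_star.
have [C_x C_near_x] := C_ext mu (ex_intro _ _ L_star) x x_ext.
have loss_le : K%:R * eps * T%:R <= 2 * K%:R * eps * T%:R.
  by rewrite -[leLHS]mul1r -!mulrA ler_wpM2r ?ler1n // !mulr_ge0 ?ler0n ?ltW.
case: (pselect (L x)) => [L_x | notL_x].
  exists x; first exact: C_x.
  rewrite revenueE // revenueE //.
  by have := mulr_ge0 (mulr_ge0 (ler0n R K) (ltW eps_gt0)) (ler0n R T); lra.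
have [r [C_r [L_r d_xr]]] := C_near_x notL_x.
exists r => //; rewrite revenueE // revenueE //.
have := total_payment_lipschitz (mu \o b) x r.
have : T%:R * K%:R * l1dist x r <= T%:R * K%:R * eps.
  by rewrite ler_wpM2l // mulr_ge0 ?ler0n.
lra.
Qed.
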